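(* Let $\Lambda=kS_{(r,s)}/I$ be a quadratic monomial algebra on an $(r,s)$-star quiver. If there are two distinct arrows $a,a'$ with $h(a)=h(a')=z$ and $\mathcal Z_a\subseteq\mathcal Z_{a'}$, or two distinct arrows $b,b'$ with $t(b)=t(b')=z$ and $\mathcal Z_b\subseteq\mathcal Z_{b'}$, then $\operatorname{Ext}^1_{\Lambda^e}(\Lambda,\Lambda^e)\neq0$.
   Context: The $(r,s)$-star quiver $S_{(r,s)}$: central vertex $z$, $r$ arrows $a_i:i\to z$ from distinct vertices and $s$ arrows $b_j:z\to j$ to distinct vertices, nothing else. Quadratic monomial: $I$ admissible generated by paths of length $2$ (necessarily of the form $b_ja_i$). For an arrow $a$ with $h(a)=z$, $\mathcal Z_a=\{b: z\to j \mid ba=0 \text{ in }\Lambda\}$; for $b$ with $t(b)=z$, $\mathcal Z_b=\{a: i\to z\mid ba=0\}$. $\Lambda^e=\Lambda\otimes_k\Lambda^{\mathrm{op}}$. *)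

From HB Require Import structures.
From mathcomp Require Import all_boot all_order all_algebra.
Set Implicit Arguments. Unset Strict Implicit. Unset Printing Implicit Defensive.
Import GRing.Theory.
Local Open Scope ring_scope.

(*   vertices : None = z, Some (inl i) = source i, Some (inr j) = sink j *)
(*   arrows   : a_i : i -> z   (i : 'I_r),   b_j : z -> j  (j : 'I_s)  *)
(*   paths    : trivial paths e_v, arrows a_i, b_j, and the length-2   *)
(*              paths b_j a_i (first a_i, then b_j).  There are no     *)
(*              longer paths.                                          *)

Definition vtx (r s : nat) := option ('I_r + 'I_s).
Definition qpath (r s : nat) := (vtx r s + (('I_r + 'I_s) + ('I_r * 'I_s)))%type.

Section Star.
Variables (r s : nat).

Definition vz : vtx r s := None.
Definition vsrc (i : 'I_r) : vtx r s := Some (inl i).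
Definition vsnk (j : 'I_s) : vtx r s := Some (inr j).

Definition pe (v : vtx r s) : qpath r s := inl v.
Definition pa (i : 'I_r) : qpath r s := inr (inl (inl i)).
Definition pb (j : 'I_s) : qpath r s := inr (inl (inr j)).
Definition pba (i : 'I_r) (j : 'I_s) : qpath r s := inr (inr (i, j)).

Definition ptail (p : qpath r s) : vtx r s :=
  match p with
  | inl v => v
  | inr (inl (inl i)) => vsrc i
  | inr (inl (inr _)) => vz
  | inr (inr (i, _)) => vsrc i
  end.
Definition phead (p : qpath r s) : vtx r s :=
  match p with
  | inl v => v
  | inr (inl (inl _)) => vz
  | inr (inl (inr j)) => vsnk j
  | inr (inr (_, j)) => vsnk j
  end.

(* product p * q in the path algebra kS_(r,s): "first q, then p";    *)
Definition pmul (p q : qpath r s) : option (qpath r s) :=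
  if ptail p != phead q then None else
  match p, q with
  | inl _, _ => Some q
  | _, inl _ => Some p
  | inr (inl (inr j)), inr (inl (inl i)) => Some (pba i j)
  | _, _ => None
  end.

(* The quadratic monomial ideal I generated by the paths b_j a_i,     *)
(* (i,j) \in Zr.  A path is a basis element of Lambda = kS/I iff it   *)
(* is not in I.                                                       *)
Definition nzpath (Zr : {set 'I_r * 'I_s}) (p : qpath r s) : bool :=
  match p with
  | inr (inr ij) => ij \notin Zr
  | _ => true
  end.

Definition LB (Zr : {set 'I_r * 'I_s}) := {p : qpath r s | nzpath Zr p}.

Variable Zr : {set 'I_r * 'I_s}.

(* product of basis elements in Lambda (None means the product is 0) *)
Definition lmul (p q : LB Zr) : option (LB Zr) :=
  obind (fun u => insub u) (pmul (val p) (val q)).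

Definition Le (v : vtx r s) : LB Zr := @exist _ _ (pe v) isT.
Definition La (i : 'I_r) : LB Zr := @exist _ _ (pa i) isT.
Definition Lb (j : 'I_s) : LB Zr := @exist _ _ (pb j) isT.

Definition Zset_a (i : 'I_r) : {set 'I_s} := [set j | lmul (Lb j) (La i) == None].
Definition Zset_b (j : 'I_s) : {set 'I_r} := [set i | lmul (Lb j) (La i) == None].

(* Lambda-bimodules (= left Lambda^e-modules, Lambda^e = Lambda (x)_k  *)
(* Lambda^op) on an F-vector space V.  The action of Lambda is given  *)
(* on the basis LB and extended linearly: L p v = p.v, R p v = v.p.   *)
Variable F : fieldType.

Definition act_of (V : lmodType F) (A : LB Zr -> V -> V) (o : option (LB Zr)) (v : V) : V :=
  if o is Some u then A u v else 0.

Record is_bimod (V : lmodType F) (L R : LB Zr -> V -> V) : Prop := IsBimod {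
  bimod_linL : forall p, linear (L p);
  bimod_linR : forall p, linear (R p);
  bimod_assocL : forall p q v, L p (L q v) = act_of L (lmul p q) v;
  bimod_assocR : forall p q v, R p (R q v) = act_of R (lmul q p) v;
  bimod_comm : forall p q v, R q (L p v) = L p (R q v);
  (* 1 = sum of the vertex idempotents acts as the identity *)
  bimod_unitL : forall v, \sum_(w : vtx r s) L (Le w) v = v;
  bimod_unitR : forall v, \sum_(w : vtx r s) R (Le w) v = v
}.

Definition is_bimod_hom (V W : lmodType F) (LV RV : LB Zr -> V -> V)
  (LW RW : LB Zr -> W -> W) (f : V -> W) : Prop :=
  [/\ linear f,
      forall p v, f (LV p v) = LW p (f v) &
      forall p v, f (RV p v) = RW p (f v)].

(* Lambda as a bimodule over itself: vectors are coordinate functions *)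
Definition Lam := {ffun LB Zr -> F^o}.
Definition LamL (p : LB Zr) (x : Lam) : Lam :=
  [ffun u => \sum_(q | lmul p q == Some u) x q].
Definition LamR (p : LB Zr) (x : Lam) : Lam :=
  [ffun u => \sum_(q | lmul q p == Some u) x q].

(* Lambda^e = Lambda (x)_k Lambda^op as a left Lambda^e-module, i.e. *)
(* as the bimodule with  p.(x (x) y).q = px (x) yq ; the basis       *)
(* element (q1, q2) stands for q1 (x) q2.                            *)
Definition Lame := {ffun (LB Zr * LB Zr) -> F^o}.
Definition LameL (p : LB Zr) (x : Lame) : Lame :=
  [ffun u => \sum_(q | lmul p q == Some u.1) x (q, u.2)].
Definition LameR (p : LB Zr) (x : Lame) : Lame :=
  [ffun u => \sum_(q | lmul q p == Some u.2) x (u.1, q)].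

(* Ext^1_{Lambda^e}(Lambda, Lambda^e) <> 0, in the Yoneda sense: there *)
(* is a non-split short exact sequence of Lambda^e-modules            *)
(*        0 -> Lambda^e -> E -> Lambda -> 0.                          *)
Definition Ext1_Lam_Lame_neq0 : Prop :=
  exists (E : lmodType F) (LE RE : LB Zr -> E -> E) (i : Lame -> E) (pi : E -> Lam),
    [/\ is_bimod LE RE,
        is_bimod_hom LameL LameR LE RE i,
        is_bimod_hom LE RE LamL LamR pi,
        (injective i /\ (forall y : Lam, exists e : E, pi e = y) /\
         (forall e : E, pi e = 0 <-> exists x : Lame, i x = e)) &
        ~ (exists sigma : Lam -> E,
              is_bimod_hom LamL LamR LE RE sigma /\ forall y, pi (sigma y) = y)].

End Star.

(* A derivation d : Λ -> Λ^e yields the extension 0 -> Λ^e -> Λ^e ⊕ Λ -> Λ -> 0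
   with left action p.(m, l) = (p m + d(p) l, p l).  A splitting (f, id) would
   give d(p) e_{t(p)} = f(e_{h(p)}) p - p f(e_{t(p)}), which is impossible when
   d(p) has a nonzero coefficient at some x ⊗ y with x ∉ pΛ and y ∉ Λp.
   If Z_a ⊆ Z_a', replacing a by a' in the paths starting with a, tensored with
   e_{t(a)}, is such a derivation: the inclusion is exactly what keeps the Leibniz
   rule at the relations b a = 0, and d(a) = a' ⊗ e_{t(a)}.  Dually, if Z_b ⊆ Z_b'
   one takes d(b) = e_{h(b)} ⊗ b'. *)

From mathcomp Require Import all_boot all_order all_algebra.
Set Implicit Arguments. Unset Strict Implicit. Unset Printing Implicit Defensive.
Import GRing.Theory.
Local Open Scope ring_scope.

Section LinearMaps.
Variables (F : fieldType) (U V : lmodType F) (f : U -> V).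
Hypothesis f_lin : linear f.

Lemma linD x y : f (x + y) = f x + f y.
Proof. by have := f_lin 1 x y; rewrite !scale1r. Qed.

Lemma lin0 : f 0 = 0.
Proof. by apply: (@addIr _ (f 0)); rewrite add0r -linD addr0. Qed.

Lemma linZ a x : f (a *: x) = a *: f x.
Proof. by have := f_lin a x 0; rewrite !addr0 lin0 addr0. Qed.

Lemma lin_sum (I : Type) (rI : seq I) (P : pred I) (g : I -> U) :
  f (\sum_(i <- rI | P i) g i) = \sum_(i <- rI | P i) f (g i).
Proof. exact: (big_morph f linD lin0). Qed.

End LinearMaps.

Lemma big_fibers (I J : finType) (V : nmodType) (g : I -> option J)
    (G : I -> J -> V) :
  \sum_j \sum_(i | g i == Some j) G i j = \sum_i oapp (G i) 0 (g i).
Proof.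
rewrite (exchange_big_dep xpredT) //=; apply: eq_bigr => i _.
case: (g i) => [t|] /=; last by rewrite big_pred0.
by rewrite (big_pred1 t) // => j /=; rewrite (inj_eq Some_inj) eq_sym.
Qed.

Section Push.
Variable F : fieldType.
Local Notation vec T := {ffun T -> F^o}.

Definition push (S T : finType) (g : S -> option T) (x : vec S) : vec T :=
  [ffun u => \sum_(q | g q == Some u) x q].

Definition delta (T : finType) (o : option T) : vec T := [ffun u => (o == Some u)%:R].

Variables S T W : finType.

Lemma push_linear (g : S -> option T) : linear (push g).
Proof.
move=> a x y; apply/ffunP => u; rewrite !ffunE scaler_sumr -big_split.
by apply: eq_bigr => q _; rewrite !ffunE.
Qed.

Lemma eq_push (g h : S -> option T) : g =1 h -> push g =1 push h.
Proof.
by move=> gh x; apply/ffunP => u; rewrite !ffunE; apply: eq_bigl => q; rewrite gh.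
Qed.

Lemma push_comp (g : T -> option W) (h : S -> option T) x :
  push g (push h x) = push (fun q => obind g (h q)) x.
Proof.
apply/ffunP => u; rewrite !ffunE.
have -> : \sum_(t | g t == Some u) push h x t =
    \sum_t \sum_(q | h q == Some t) (if g t == Some u then x q else 0).
  rewrite big_mkcond; apply: eq_bigr => t _; rewrite ffunE.
  by case: ifP => _ //; rewrite big1.
rewrite big_fibers [RHS]big_mkcond; apply: eq_bigr => q _.
by case: (h q).
Qed.

Lemma push_none x : push (fun _ : S => None : option T) x = 0.
Proof. by apply/ffunP => u; rewrite !ffunE big_pred0. Qed.

Lemma push_restrict (P : pred S) x u :
  push (fun q => if P q then Some q else None) x u = if P u then x u else 0.
Proof.
rewrite ffunE big_mkcond (bigD1 u) //= big1 ?addr0 => [|q /negbTE qu].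
  by case: (P u); rewrite ?eqxx.
by case: (P q); rewrite //= (inj_eq Some_inj) qu.
Qed.

Lemma push_partition (c : S -> T) x :
  \sum_(w : T) push (fun q => if c q == w then Some q else None) x = x.
Proof.
apply/ffunP => u; rewrite sum_ffunE.
under eq_bigr do rewrite push_restrict.
by rewrite -big_mkcond (big_pred1 (c u)) // => w; rewrite eq_sym.
Qed.

Lemma push_delta (g : S -> option T) o : push g (delta o) = delta (obind g o).
Proof.
apply/ffunP => u; rewrite !ffunE.
under eq_bigr do rewrite ffunE.
case: o => [t|] /=; last by rewrite big1.
rewrite big_mkcond (bigD1 t) //= eqxx big1 ?addr0 => [|q /negbTE qt].
  by case: ifP.
by rewrite (inj_eq Some_inj) [t == q]eq_sym qt; case: ifP.
Qed.

Lemma delta_none : delta (None : option T) = 0.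
Proof. by apply/ffunP => u; rewrite !ffunE. Qed.

Lemma push_outside (g : S -> option T) x u :
  (forall q, g q != Some u) -> push g x u = 0.
Proof. by move=> gu; rewrite ffunE big_pred0 // => q; apply/negbTE. Qed.

End Push.

(* For d(p) := the basis tensor [th p] (0 if [None]): of p d(q) and d(p) q at most
   one is nonzero, and it equals d(pq). *)
Definition monomial_Leibniz (X : Type) (mul : X -> X -> option X)
    (th : X -> option (X * X)) (p q : X) : Prop :=
  let left := obind (fun v => omap (fun t => (t, v.2)) (mul p v.1)) (th q) in
  let right := obind (fun v => omap (fun t => (v.1, t)) (mul v.2 q)) (th p) in
  let prod := obind th (mul p q) in
  (left = None /\ right = prod) \/ (right = None /\ left = prod).

(* An algebra with a basis K closed under multiplication up to zero ([None]), the
   identity being the sum of the basis idempotents [e w]; [hd p] and [tl p] are the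
   vertices where p ends and starts.  Modules are given in coordinates. *)
Section MultiplicativeBasis.
Variables (F : fieldType) (K V : finType) (mul : K -> K -> option K) (e : V -> K).
Variables (hd tl : K -> V).
Hypothesis mulA : forall p q w,
  obind (mul p) (mul q w) = obind (fun t => mul t w) (mul p q).
Hypothesis mul_idl : forall p w, mul (e w) p = if hd p == w then Some p else None.
Hypothesis mul_idr : forall p w, mul p (e w) = if tl p == w then Some p else None.
Local Notation vec T := {ffun T -> F^o}.

Record bimodule (M : lmodType F) (L R : K -> M -> M) : Prop := Bimodule {
  linL : forall p, linear (L p);
  linR : forall p, linear (R p);
  assocL : forall p q m, L p (L q m) = oapp (fun u => L u m) 0 (mul p q);
  assocR : forall p q m, R p (R q m) = oapp (fun u => R u m) 0 (mul q p);
  commLR : forall p q m, R q (L p m) = L p (R q m);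
  unitL : forall m, \sum_w L (e w) m = m;
  unitR : forall m, \sum_w R (e w) m = m
}.

Definition bimod_hom (M N : lmodType F) (LM RM : K -> M -> M) (LN RN : K -> N -> N)
    (f : M -> N) : Prop :=
  [/\ linear f, forall p m, f (LM p m) = LN p (f m) & forall p m, f (RM p m) = RN p (f m)].

Definition regL p : vec K -> vec K := push (mul p).
Definition regR p : vec K -> vec K := push (fun q => mul q p).

Definition envL p (x : vec (K * K)) : vec (K * K) :=
  [ffun u => \sum_(q | mul p q == Some u.1) x (q, u.2)].
Definition envR p (x : vec (K * K)) : vec (K * K) :=
  [ffun u => \sum_(q | mul q p == Some u.2) x (u.1, q)].

Definition Ext1_nonzero : Prop :=
  exists (M : lmodType F) (LM RM : K -> M -> M) (i : vec (K * K) -> M) (pi : M -> vec K),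
    [/\ bimodule LM RM, bimod_hom envL envR LM RM i, bimod_hom LM RM regL regR pi,
        injective i /\ (forall l, exists m, pi m = l) /\
          (forall m, pi m = 0 <-> exists z, i z = m) &
        ~ exists sigma, bimod_hom regL regR LM RM sigma /\ forall l, pi (sigma l) = l].

Section PushBimodule.
Variables (T : finType) (L R : K -> vec T -> vec T) (gL gR : K -> T -> option T).
Variables (hdT tlT : T -> V).
Hypothesis LE : forall p x, L p x = push (gL p) x.
Hypothesis RE : forall p x, R p x = push (gR p) x.
Hypothesis gL_assoc : forall p q v,
  obind (gL p) (gL q v) = obind (fun t => gL t v) (mul p q).
Hypothesis gR_assoc : forall p q v,
  obind (gR p) (gR q v) = obind (fun t => gR t v) (mul q p).
Hypothesis gLR_comm : forall p q v, obind (gR q) (gL p v) = obind (gL p) (gR q v).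
Hypothesis gL_idl : forall w v, gL (e w) v = if hdT v == w then Some v else None.
Hypothesis gR_idr : forall w v, gR (e w) v = if tlT v == w then Some v else None.

Lemma push_bimodule : bimodule L R.
Proof.
split=> [p a x y | p a x y | p q x | p q x | p q x | x | x].
- by rewrite !LE; apply: push_linear.
- by rewrite !RE; apply: push_linear.
- rewrite !LE push_comp (eq_push (gL_assoc p q)).
  by case: (mul p q) => [t|] /=; rewrite ?LE ?push_none.
- rewrite !RE push_comp (eq_push (gR_assoc p q)).
  by case: (mul q p) => [t|] /=; rewrite ?RE ?push_none.
- by rewrite LE RE LE RE !push_comp (eq_push (gLR_comm p q)).
- under eq_bigr do rewrite LE (eq_push (gL_idl _)).
  exact: push_partition.
- under eq_bigr do rewrite RE (eq_push (gR_idr _)).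
  exact: push_partition.
Qed.

End PushBimodule.

Lemma reg_bimodule : bimodule regL regR.
Proof.
apply: (@push_bimodule _ _ _ mul (fun p q => mul q p) hd tl) => // [p q v|p q v|p q v].
all: by rewrite mulA.
Qed.

Definition tmulL p (v : K * K) := omap (fun t => (t, v.2)) (mul p v.1).
Definition tmulR (v : K * K) q := omap (fun t => (v.1, t)) (mul v.2 q).

Lemma envL_push p x : envL p x = push (tmulL p) x.
Proof.
apply/ffunP => -[u1 u2]; rewrite !ffunE /=.
rewrite (eq_bigl (fun v => (mul p v.1 == Some u1) && (v.2 == u2))) => [|[a b]];
  last by rewrite /tmulL /=; case: (mul p a) => //= t; rewrite !(inj_eq Some_inj) xpair_eqE.
rewrite (eq_bigr (fun v => x (v.1, v.2))) => [|[] //].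
rewrite -(pair_big_dep (fun a => mul p a == Some u1) (fun _ b => b == u2)
  (fun a b => x (a, b))).
by apply: eq_bigr => a _; rewrite big_pred1_eq.
Qed.

Lemma envR_push q x : envR q x = push (tmulR^~ q) x.
Proof.
apply/ffunP => -[u1 u2]; rewrite !ffunE /=.
rewrite (eq_bigl (fun v => (v.1 == u1) && (mul v.2 q == Some u2))) => [|[a b]];
  last by rewrite /tmulR /=; case: (mul b q) => [t|] /=;
    rewrite ?andbF ?(inj_eq Some_inj) ?xpair_eqE.
rewrite (eq_bigr (fun v => x (v.1, v.2))) => [|[] //].
rewrite -(pair_big_dep (fun a => a == u1) (fun _ b => mul b q == Some u2)
  (fun a b => x (a, b))).
by rewrite big_pred1_eq.
Qed.

Lemma env_bimodule : bimodule envL envR.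
Proof.
apply: (@push_bimodule _ _ _ tmulL (fun p v => tmulR v p)
  (fun v => hd v.1) (fun v => tl v.2)).
- exact: envL_push.
- exact: envR_push.
- move=> p q [a b]; rewrite /tmulL /=; have := mulA p q a.
  case: (mul q a) => [t|]; case: (mul p q) => [t'|] //= E; by [rewrite E | rewrite -E].
- move=> p q [a b]; rewrite /tmulR /=; have := mulA b q p.
  case: (mul b q) => [t|]; case: (mul q p) => [t'|] //= E; by [rewrite E | rewrite -E].
- move=> p q [a b]; rewrite /tmulL /tmulR /=.
  by case Ea: (mul p a) => [t|]; case Eb: (mul b q) => [t'|] //=; rewrite ?Ea ?Eb.
- by move=> w [a b]; rewrite /tmulL mul_idl; case: ifP.
- by move=> w [a b]; rewrite /tmulR mul_idr; case: ifP.
Qed.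

Lemma envL_outside p x y m : (forall q, mul p q != Some x) -> envL p m (x, y) = 0.
Proof.
move=> px; rewrite envL_push; apply: push_outside => -[a b]; rewrite /tmulL /=.
by case E: (mul p a) => [t|] //; apply: contraNneq (px a) => -[<- _]; rewrite E.
Qed.

Lemma envR_outside q x y m : (forall p, mul p q != Some y) -> envR q m (x, y) = 0.
Proof.
move=> qy; rewrite envR_push; apply: push_outside => -[a b]; rewrite /tmulR /=.
by case E: (mul b q) => [t|] //; apply: contraNneq (qy b) => -[_ <-]; rewrite E.
Qed.

Lemma envR_id w m x y : envR (e w) m (x, y) = if tl y == w then m (x, y) else 0.
Proof.
rewrite envR_push (eq_push (h := fun v => if tl v.2 == w then Some v else None)).
  by rewrite push_restrict.
by move=> [a b]; rewrite /tmulR mul_idr; case: ifP.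
Qed.

Let env_ax := env_bimodule.

Definition ract (m : vec (K * K)) (l : vec K) : vec (K * K) := \sum_u l u *: envR u m.

Lemma ract_linear m : linear (ract m).
Proof.
move=> a x y; rewrite /ract scaler_sumr -big_split; apply: eq_bigr => u _.
by rewrite !ffunE scalerDl scalerA.
Qed.

Lemma ractDl m1 m2 l : ract (m1 + m2) l = ract m1 l + ract m2 l.
Proof.
rewrite /ract -big_split; apply: eq_bigr => u _.
by rewrite (linD (linR env_ax u)) scalerDr.
Qed.

Lemma ract0l l : ract 0 l = 0.
Proof. by rewrite /ract big1 // => u _; rewrite (lin0 (linR env_ax u)) scaler0. Qed.

Lemma ract_envL p m l : ract (envL p m) l = envL p (ract m l).
Proof.
rewrite /ract (lin_sum (linL env_ax p)); apply: eq_bigr => u _.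
by rewrite (linZ (linL env_ax p)) commLR.
Qed.

Lemma ract_regL m q l : ract m (regL q l) = ract (envR q m) l.
Proof.
rewrite /ract; under eq_bigr do rewrite ffunE scaler_suml.
rewrite (big_fibers _ (fun i u => l i *: envR u m)); apply: eq_bigr => i _.
by rewrite (assocR env_ax); case: (mul q i) => //=; rewrite scaler0.
Qed.

Lemma ract_regR m q l : ract m (regR q l) = envR q (ract m l).
Proof.
rewrite /ract (lin_sum (linR env_ax q)).
under eq_bigr do rewrite ffunE scaler_suml.
rewrite (big_fibers _ (fun i u => l i *: envR u m)); apply: eq_bigr => i _.
by rewrite (linZ (linR env_ax q)) (assocR env_ax); case: (mul i q) => //=; rewrite scaler0.
Qed.

Lemma ract_delta m q : ract m (delta F (Some q)) = envR q m.
Proof.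
rewrite /ract (bigD1 q) //= big1 => [|u /negbTE uq].
  by rewrite ffunE eqxx scale1r addr0.
by rewrite ffunE (inj_eq Some_inj) eq_sym uq scale0r.
Qed.

Section DerivationExtension.
Variable d : K -> vec (K * K).
Hypothesis d_Leibniz : forall p q, envL p (d q) + envR q (d p) = oapp d 0 (mul p q).
Hypothesis d_id : forall w, d (e w) = 0.

Definition extL p (x : vec (K * K) * vec K) := (envL p x.1 + ract (d p) x.2, regL p x.2).
Definition extR q (x : vec (K * K) * vec K) := (envR q x.1, regR q x.2).

Lemma ext_bimodule : bimodule extL extR.
Proof.
have [eLl eLr eAl eAr eC eUl eUr] := env_ax.
have [rLl rLr rAl rAr rC rUl rUr] := reg_bimodule.
have sum_pair (f : V -> vec (K * K) * vec K) :
    \sum_w f w = (\sum_w (f w).1, \sum_w (f w).2).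
  by rewrite [LHS]surjective_pairing !raddf_sum.
split=> [p a [m1 l1] [m2 l2] | p a [m1 l1] [m2 l2] | p q [m l] | p q [m l]
        | p q [m l] | [m l] | [m l]].
- rewrite /extL /= eLl ract_linear rLl; congr (_, _).
  by rewrite /= scalerDr addrACA.
- by rewrite /extR /= eLr rLr.
- rewrite /extL /= (linD (eLl p)) ract_regL -ract_envL -addrA -ractDl d_Leibniz eAl rAl.
  by case: (mul p q) => [t|] //=; rewrite ract0l addr0.
- by rewrite /extR /= eAr rAr; case: (mul q p).
- by rewrite /extL /extR /= (linD (eLr q)) eC rC ract_regR.
- rewrite sum_pair /= big_split /= eUl rUl big1 ?addr0 // => w _.
  by rewrite d_id ract0l.
- by rewrite sum_pair /= eUr rUr.
Qed.

Lemma ext_nonsplit p x y :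
  (forall q, mul p q != Some x) -> (forall q, mul q p != Some y) -> tl y = tl p ->
  d p (x, y) != 0 ->
  ~ exists sigma : vec K -> vec (K * K) * vec K,
      bimod_hom regL regR extL extR sigma /\ forall l, (sigma l).2 = l.
Proof.
move=> px py tl_y dp [sigma [[_ HL HR] sigmaK]].
pose f l := (sigma l).1.
have sigmaE l : sigma l = (f l, l) by rewrite /f; case: (sigma l) (sigmaK l) => a b /= ->.
have regL_id : regL p (delta F (Some (e (tl p)))) = delta F (Some p).
  by rewrite /regL push_delta /= mul_idr eqxx.
have regR_id : regR p (delta F (Some (e (hd p)))) = delta F (Some p).
  by rewrite /regR push_delta /= mul_idl eqxx.
have := congr1 fst (HL p (delta F (Some (e (tl p))))).
rewrite regL_id !sigmaE /= ract_delta => EL.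
have := congr1 fst (HR p (delta F (Some (e (hd p))))).
rewrite regR_id !sigmaE /= EL => /(congr1 (fun m : vec (K * K) => m (x, y))).
have addE (m1 m2 : vec (K * K)) u : (m1 + m2) u = m1 u + m2 u by rewrite ffunE.
rewrite addE envR_id tl_y eqxx envL_outside // envR_outside // add0r => dp0.
by rewrite -dp0 eqxx in dp.
Qed.

Lemma Ext1_nonzero_of_derivation p x y :
  (forall q, mul p q != Some x) -> (forall q, mul q p != Some y) -> tl y = tl p ->
  d p (x, y) != 0 -> Ext1_nonzero.
Proof.
move=> px py tl_y dp.
have [rLl rLr _ _ _ _ _] := reg_bimodule.
exists (vec (K * K) * vec K)%type, extL, extR, (fun m => (m, 0)), snd.
split.
- exact: ext_bimodule.
- split => [a m1 m2 | q m | q m]; rewrite /extL /extR /=.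
  + by congr (_, _); rewrite /= scaler0 addr0.
  + by rewrite (lin0 (ract_linear _)) (lin0 (rLl q)) addr0.
  + by rewrite (lin0 (rLr q)).
- by split.
- split; first by move=> m1 m2 [].
  split => [l | [m l]]; first by exists (0, l).
  by split => [/= -> | [z [_ <-]]]; first exists m.
- exact: ext_nonsplit.
Qed.

End DerivationExtension.

Lemma delta_Leibniz th : (forall p q, monomial_Leibniz mul th p q) ->
  forall p q, envL p (delta F (th q)) + envR q (delta F (th p)) =
              oapp (fun t => delta F (th t)) 0 (mul p q).
Proof.
move=> th_Leibniz p q; rewrite envL_push envR_push !push_delta.
have -> : oapp (fun t => delta F (th t)) 0 (mul p q) = delta F (obind th (mul p q)).
  by case: (mul p q) => //=; rewrite delta_none.
by case: (th_Leibniz p q) => -[-> ->]; rewrite delta_none ?add0r ?addr0.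
Qed.

Lemma Ext1_nonzero_of_monomial th p x y :
  (forall p q, monomial_Leibniz mul th p q) -> (forall w, th (e w) = None) ->
  (forall q, mul p q != Some x) -> (forall q, mul q p != Some y) -> tl y = tl p ->
  th p = Some (x, y) -> Ext1_nonzero.
Proof.
move=> th_Leibniz th_id px py tl_y thp.
apply: (@Ext1_nonzero_of_derivation (fun p => delta F (th p)) _ _ p x y) => //.
- exact: delta_Leibniz.
- by move=> w; rewrite th_id delta_none.
- by rewrite thp ffunE eqxx oner_eq0.
Qed.

End MultiplicativeBasis.

Ltac case_qpath x := case: x => [[[?|?]|]|[[?|?]|[? ?]]].

Ltac decide_eqs := repeat (match goal with
  | |- context [?a == ?b] => let E := fresh "E" in case: (a =P b) => [E|E];
       [try (injection E; clear E; intros; subst); try subst | ]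
  | |- context [if ?c then _ else _] => let E := fresh "E" in case E: c; try congruence
  end; rewrite //=).

Section StarPaths.
Variables (r s : nat) (Zr : {set 'I_r * 'I_s}).
Local Notation qp := (qpath r s).

Definition lmul_path (x y : qp) : option qp :=
  obind (fun u => if nzpath Zr u then Some u else None) (pmul x y).

Lemma lmul_path_assoc (x y z : qp) : nzpath Zr x -> nzpath Zr y -> nzpath Zr z ->
  obind (lmul_path x) (lmul_path y z) = obind (fun t => lmul_path t z) (lmul_path x y).
Proof.
by case_qpath x; case_qpath y; case_qpath z => //= *;
  rewrite /lmul_path /pmul /=; decide_eqs.
Qed.

Lemma lmul_val (p q : LB Zr) : omap val (lmul p q) = lmul_path (val p) (val q).
Proof.
rewrite /lmul /lmul_path; case: pmul => //= u.
case: insubP => [v Pu E | /negbTE ->] //=; by rewrite Pu E.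
Qed.

Lemma omap_val_inj : injective (omap (fun p : LB Zr => val p)).
Proof. by move=> [a|] [b|] //= [/val_inj ->]. Qed.

Lemma lmul_assoc (p q w : LB Zr) :
  obind (lmul p) (lmul q w) = obind (fun t => lmul t w) (lmul p q).
Proof.
apply: omap_val_inj.
have omap_obind (o : option (LB Zr)) f :
  omap val (obind f o) = obind (fun t => omap val (f t)) o by case: o.
rewrite !omap_obind.
have -> : obind (fun t => omap val (lmul p t)) (lmul q w) =
    obind (lmul_path (val p)) (omap val (lmul q w)).
  by case: (lmul q w) => //= t; rewrite lmul_val.
have -> : obind (fun t => omap val (lmul t w)) (lmul p q) =
    obind (fun t => lmul_path t (val w)) (omap val (lmul p q)).
  by case: (lmul p q) => //= t; rewrite lmul_val.
by rewrite !lmul_val; apply: lmul_path_assoc; apply: valP.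
Qed.

Lemma lmul_vertexl (p : LB Zr) w :
  lmul (Le Zr w) p = if phead (val p) == w then Some p else None.
Proof.
apply: omap_val_inj; rewrite lmul_val (fun_if (omap _)); case: p => x /=.
by case_qpath x; case: w => [[?|?]|] //= *; rewrite /lmul_path /pmul /=; decide_eqs.
Qed.

Lemma lmul_vertexr (p : LB Zr) w :
  lmul p (Le Zr w) = if ptail (val p) == w then Some p else None.
Proof.
apply: omap_val_inj; rewrite lmul_val (fun_if (omap _)); case: p => x /=.
by case_qpath x; case: w => [[?|?]|] //= *; rewrite /lmul_path /pmul /=; decide_eqs.
Qed.

End StarPaths.

Section PathDerivations.
Variables (r s : nat) (Zr : {set 'I_r * 'I_s}) (F : fieldType).
Local Notation qp := (qpath r s).
Local Notation K := (LB Zr).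

Lemma Ext1_Lam_Lame_neq0_of_basis :
  Ext1_nonzero F (@lmul _ _ Zr) (Le Zr) -> Ext1_Lam_Lame_neq0 Zr F.
Proof.
case=> M [LM [RM [i [pi [[? ? ? ? ? ? ?] ? ? ? ?]]]]].
by exists M, LM, RM, i, pi; split.
Qed.

Variable thq : qp -> option (qp * qp).
Hypothesis thq_nz : forall x a b, thq x = Some (a, b) -> nzpath Zr a && nzpath Zr b.
Hypothesis thq_id : forall w, thq (pe w) = None.
Hypothesis thq_Leibniz : forall x y, nzpath Zr x -> nzpath Zr y ->
  monomial_Leibniz (lmul_path Zr) thq x y.

Definition val2 (v : K * K) : qp * qp := (val v.1, val v.2).

Lemma omap_val2_inj : injective (omap val2).
Proof. by move=> [[a b]|] [[c d]|] //= [/val_inj -> /val_inj ->]. Qed.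

Definition lift_th (p : K) : option (K * K) :=
  obind (fun v => if insub v.1 is Some a then omap (pair a) (insub v.2) else None)
    (thq (val p)).

Lemma lift_thE p : omap val2 (lift_th p) = thq (val p).
Proof.
rewrite /lift_th; case E: (thq (val p)) => [[a b]|] //=.
by have /andP[na nb] := thq_nz E; rewrite (insubT _ na) (insubT _ nb).
Qed.

Lemma lift_th_Leibniz p q : monomial_Leibniz (@lmul _ _ Zr) lift_th p q.
Proof.
have := thq_Leibniz (valP p) (valP q); rewrite /monomial_Leibniz -!lift_thE.
have -> : obind (fun v => omap (fun t => (t, v.2)) (lmul_path Zr (val p) v.1))
    (omap val2 (lift_th q)) =
  omap val2 (obind (fun v => omap (fun t => (t, v.2)) (lmul p v.1)) (lift_th q)).
  by case: (lift_th q) => [[a b]|] //=; rewrite -lmul_val; case: (lmul p a).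
have -> : obind (fun v => omap (fun t => (v.1, t)) (lmul_path Zr v.2 (val q)))
    (omap val2 (lift_th p)) =
  omap val2 (obind (fun v => omap (fun t => (v.1, t)) (lmul v.2 q)) (lift_th p)).
  by case: (lift_th p) => [[a b]|] //=; rewrite -lmul_val; case: (lmul b q).
have -> : obind thq (lmul_path Zr (val p) (val q)) = omap val2 (obind lift_th (lmul p q)).
  by rewrite -lmul_val; case: (lmul p q) => //= t; rewrite lift_thE.
have none2 (o : option (K * K)) : omap val2 o = None -> o = None by case: o.
by case=> -[/none2 -> /omap_val2_inj ->]; [left | right].
Qed.

Lemma Ext1_of_path_derivation (p x y : K) :
  (forall q, lmul_path Zr (val p) q != Some (val x)) ->
  (forall q, lmul_path Zr q (val p) != Some (val y)) ->
  ptail (val y) = ptail (val p) -> thq (val p) = Some (val x, val y) ->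
  Ext1_Lam_Lame_neq0 Zr F.
Proof.
move=> px py tl_y thp; apply: Ext1_Lam_Lame_neq0_of_basis.
apply: (@Ext1_nonzero_of_monomial F _ _ _ _ (fun q => phead (val q))
  (fun q => ptail (val q)) _ _ _ lift_th p x y).
- exact: lmul_assoc.
- exact: lmul_vertexl.
- exact: lmul_vertexr.
- exact: lift_th_Leibniz.
- by move=> w; rewrite /lift_th thq_id.
- by move=> q; apply: contraNneq (px (val q)) => E; rewrite -lmul_val E.
- by move=> q; apply: contraNneq (py (val q)) => E; rewrite -lmul_val E.
- exact: tl_y.
- by apply: omap_val2_inj; rewrite lift_thE.
Qed.

End PathDerivations.

Section ArrowsIntoCentre.
Variables (r s : nat) (Zr : {set 'I_r * 'I_s}) (F : fieldType) (i0 i1 : 'I_r).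
Hypothesis i01 : i0 != i1.
Hypothesis Z_sub : forall j, (i1, j) \notin Zr -> (i0, j) \notin Zr.

(* The derivation of the proof idea for a := a_i0, a' := a_i1, on the path basis. *)
Definition replace_a (x : qpath r s) : option (qpath r s * qpath r s) :=
  match x with
  | inr (inl (inl i)) => if i == i0 then Some (pa s i1, pe (vsrc s i0)) else None
  | inr (inr (i, j)) =>
      if (i == i0) && ((i1, j) \notin Zr) then Some (pba i1 j, pe (vsrc s i0)) else None
  | _ => None
  end.

Lemma replace_a_Leibniz x y : nzpath Zr x -> nzpath Zr y ->
  monomial_Leibniz (lmul_path Zr) replace_a x y.
Proof.
rewrite /monomial_Leibniz; case_qpath x; case_qpath y => //= *;
  rewrite /lmul_path /pmul /=; decide_eqs; try (by left); try (by right).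
by match goal with E : _ = true, E' : _ = false |- _ => rewrite (Z_sub E) in E' end.
Qed.

Lemma Ext1_neq0_arrows_into_centre : Ext1_Lam_Lame_neq0 Zr F.
Proof.
apply: (@Ext1_of_path_derivation _ _ Zr F replace_a _ _ _ (La Zr i0) (La Zr i1)
  (Le Zr (vsrc s i0))) => //=.
- move=> x a b; case_qpath x => //=; decide_eqs; by case=> <- <- /=; rewrite ?andbT.
- exact: @replace_a_Leibniz.
- move=> q; apply/eqP; case_qpath q; rewrite /lmul_path /pmul /=; decide_eqs;
  by rewrite /pa; move/eqP: i01; congruence.
- move=> q; apply/eqP; case_qpath q; rewrite /lmul_path /pmul /=; decide_eqs;
  by rewrite /pa /pe.
- by rewrite eqxx.
Qed.

End ArrowsIntoCentre.

Section ArrowsOutOfCentre.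
Variables (r s : nat) (Zr : {set 'I_r * 'I_s}) (F : fieldType) (j0 j1 : 'I_s).
Hypothesis j01 : j0 != j1.
Hypothesis Z_sub : forall i, (i, j1) \notin Zr -> (i, j0) \notin Zr.

(* The derivation of the proof idea for b := b_j0, b' := b_j1. *)
Definition replace_b (x : qpath r s) : option (qpath r s * qpath r s) :=
  match x with
  | inr (inl (inr j)) => if j == j0 then Some (pe (vsnk r j0), pb r j1) else None
  | inr (inr (i, j)) =>
      if (j == j0) && ((i, j1) \notin Zr) then Some (pe (vsnk r j0), pba i j1) else None
  | _ => None
  end.

Lemma replace_b_Leibniz x y : nzpath Zr x -> nzpath Zr y ->
  monomial_Leibniz (lmul_path Zr) replace_b x y.
Proof.
rewrite /monomial_Leibniz; case_qpath x; case_qpath y => //= *;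
  rewrite /lmul_path /pmul /=; decide_eqs; try (by left); try (by right).
by match goal with E : _ = true, E' : _ = false |- _ => rewrite (Z_sub E) in E' end.
Qed.

Lemma Ext1_neq0_arrows_out_of_centre : Ext1_Lam_Lame_neq0 Zr F.
Proof.
apply: (@Ext1_of_path_derivation _ _ Zr F replace_b _ _ _ (Lb Zr j0)
  (Le Zr (vsnk r j0)) (Lb Zr j1)) => //=.
- move=> x a b; case_qpath x => //=; decide_eqs; by case=> <- <- /=.
- exact: @replace_b_Leibniz.
- move=> q; apply/eqP; case_qpath q; rewrite /lmul_path /pmul /=; decide_eqs;
  by rewrite /pb /pe.
- move=> q; apply/eqP; case_qpath q; rewrite /lmul_path /pmul /=; decide_eqs;
  by rewrite /pb; move/eqP: j01; congruence.
- by rewrite eqxx.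
Qed.

End ArrowsOutOfCentre.

Lemma lmul_ba_None r s (Zr : {set 'I_r * 'I_s}) i j :
  (lmul (Lb Zr j) (La Zr i) == None) = ((i, j) \in Zr).
Proof.
have := lmul_val (Lb Zr j) (La Zr i); rewrite /lmul_path /pmul /=.
by case: (lmul _ _); case: ((i, j) \in Zr).
Qed.

Theorem mainTheorem15 (F : fieldType) (r s : nat) (Zr : {set 'I_r * 'I_s}) :
  ((exists i i' : 'I_r, i != i' /\ Zset_a Zr i \subset Zset_a Zr i') \/
   (exists j j' : 'I_s, j != j' /\ Zset_b Zr j \subset Zset_b Zr j')) ->
  Ext1_Lam_Lame_neq0 Zr F.
Proof.
case=> [[i [i' [ii' /subsetP sub]]] | [j [j' [jj' /subsetP sub]]]].
- apply: (Ext1_neq0_arrows_into_centre _ ii') => j.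
  by apply: contra => ij; have := sub j; rewrite !inE !lmul_ba_None; apply.
- apply: (Ext1_neq0_arrows_out_of_centre _ jj') => i.
  by apply: contra => ij; have := sub i; rewrite !inE !lmul_ba_None; apply.
Qed.
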